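(* Let $\Gamma$ be a connected countable graph and let $(B_n)_{n\in\mathbb N}$ satisfy $(\dagger)$. Let $u,v\in V(\Gamma)$ be such that no maximum matching misses both $u$ and $v$, but there are maximum matchings $M_u$ and $M_v$ missing $u$ and $v$ respectively. Then $M_u\oplus M_v$ contains a path of even length with end-vertices $u$ and $v$.
   Context: Condition $(\dagger)$ on $(B_n)_{n\in\mathbb N}$: each $B_n\subseteq V(\Gamma)$ is finite, $B_n\subseteq B_{n+1}$, $\bigcup_n B_n=V(\Gamma)$, and the subgraph induced on each $B_n$ is connected. A matching $M$ misses a vertex $x$ if no edge of $M$ contains $x$. The miss sequence of $M$ is $(m_n)_{n\in\mathbb N}$ with $m_n$ the number of vertices of $B_n$ missed by $M$. For matchings $M_1,M_2$ with miss sequences $(a_n),(b_n)$, write $M_1<M_2$ if there is $N$ with $a_n=b_n$ for all $n<N$ and $a_N>b_N$. A maximum matching is a matching $M$ for which no matching $M'$ satisfies $M<M'$. $S\oplus T=(S\cup T)\setminus(S\cap T)$. *)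

From mathcomp Require Import all_boot.
Set Implicit Arguments. Unset Strict Implicit. Unset Printing Implicit Defensive.

Section Graphs.
Variable V : countType.

Definition simple_graph (adj : rel V) := symmetric adj /\ irreflexive adj.

Definition joined_in (adj : rel V) (P : pred V) (x y : V) :=
  exists p : seq V, [/\ path adj x p, last x p = y & all P (x :: p)].

Definition connected_graph (adj : rel V) := forall x y, joined_in adj predT x y.

(* Condition (dagger): B n finite (a duplicate-free list), nested, exhausting,
   and inducing connected subgraphs. *)
Definition dagger (adj : rel V) (B : nat -> seq V) :=
  [/\ forall n, uniq (B n),
      forall n, {subset B n <= B n.+1},
      forall x, exists n, x \in B n
    & forall n x y, x \in B n -> y \in B n -> joined_in adj (mem (B n)) x y].

(* A matching is encoded by its mate function: M x = Some y iff {x,y} is an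
   edge of the matching; M x = None iff x is missed. *)
Definition matching (adj : rel V) (M : V -> option V) :=
  forall x y, M x = Some y -> adj x y /\ M y = Some x.

Definition in_matching (M : V -> option V) (x y : V) : bool := M x == Some y.

Definition misses (M : V -> option V) (x : V) : bool := M x == None.

Definition miss_seq (B : nat -> seq V) (M : V -> option V) (n : nat) : nat :=
  count (misses M) (B n).

Definition mlt (B : nat -> seq V) (M1 M2 : V -> option V) :=
  exists N, (forall n, n < N -> miss_seq B M1 n = miss_seq B M2 n)
            /\ miss_seq B M1 N > miss_seq B M2 N.

Definition maximum_matching adj B (M : V -> option V) :=
  matching adj M /\ ~ exists M', matching adj M' /\ mlt B M M'.

Definition in_symdiff (M1 M2 : V -> option V) (x y : V) : bool :=
  in_matching M1 x y != in_matching M2 x y.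

(* M1 (+) M2 contains a path (distinct vertices) of even length from u to v;
   the path is u :: p, of length size p. *)
Definition symdiff_even_path (M1 M2 : V -> option V) (u v : V) :=
  exists p : seq V, [/\ path (in_symdiff M1 M2) u p, last u p = v,
                        uniq (u :: p) & ~~ odd (size p)].
End Graphs.

(* Let C be the set of vertices reachable from u by a walk in
   Mu (+) Mv.  C is closed under the edges of Mu (+) Mv, so the function that
   follows Mu inside C and Mv outside C is again a matching; the same holds
   for the opposite swap.  The two swapped matchings together miss exactly
   as many vertices of every B_n as Mu and Mv together, and since maximum
   matchings all have the same miss sequence, neither swap can be strictly
   worse than a maximum matching: both are maximum.  If v were outside C,
   the first swap would miss u (as Mu does) and v (as Mv does), which is
   excluded; hence v is reachable from u.  Shortening the walk gives a path
   of distinct vertices from u to v; it alternates between Mu and Mv and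
   starts and ends at a vertex missed by the matching it does not use there,
   which forces its length to be even. *)
From Stdlib Require Import ClassicalEpsilon Classical.
From mathcomp Require Import all_boot zify.
Set Implicit Arguments. Unset Strict Implicit. Unset Printing Implicit Defensive.

Section AlternatingSwap.
Variable V : countType.
Variable adj : rel V.

Lemma in_symdiffC (M1 M2 : V -> option V) : in_symdiff M1 M2 =2 in_symdiff M2 M1.
Proof. by move=> x y; rewrite /in_symdiff eq_sym. Qed.

Lemma in_symdiff_sym (M1 M2 : V -> option V) x y :
  matching adj M1 -> matching adj M2 ->
  in_symdiff M1 M2 x y = in_symdiff M1 M2 y x.
Proof.
move=> m1 m2.
have mate (M : V -> option V) : matching adj M -> in_matching M x y = in_matching M y x.
  move=> m; rewrite /in_matching.
  by apply/eqP/eqP => [/m[]|/m[]].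
by rewrite /in_symdiff (mate _ m1) (mate _ m2).
Qed.

Definition swap (C : pred V) (M1 M2 : V -> option V) (x : V) : option V :=
  if C x then M1 x else M2 x.

Definition symdiff_closed (M1 M2 : V -> option V) (C : pred V) :=
  forall x y, C x -> in_symdiff M1 M2 x y -> C y.

Section Swap.
Variables (M1 M2 : V -> option V) (C : pred V).
Hypotheses (m1 : matching adj M1) (m2 : matching adj M2).
Hypothesis closedC : symdiff_closed M1 M2 C.

Lemma symdiff_closedC : symdiff_closed M2 M1 (predC C).
Proof.
move=> x y /negP nCx Exy; apply/negP => Cy; apply: nCx.
by apply: (closedC Cy); rewrite in_symdiff_sym // in_symdiffC.
Qed.

Lemma swap_mate x y : C x -> M1 x = Some y -> swap C M1 M2 y = Some x.
Proof.
move=> Cx M1xy; rewrite /swap; have [_ M1yx] := m1 M1xy.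
case Cy: (C y) => //.
have M2xy : M2 x = Some y.
  apply/eqP; apply: contraFT Cy => M2xy; apply: (closedC Cx).
  by rewrite /in_symdiff /in_matching M1xy eqxx.
by have [] := m2 M2xy.
Qed.

End Swap.

Lemma swap_matching (M1 M2 : V -> option V) (C : pred V) :
  matching adj M1 -> matching adj M2 -> symdiff_closed M1 M2 C ->
  matching adj (swap C M1 M2).
Proof.
move=> m1 m2 closedC x y; rewrite {1}/swap; case Cx: (C x) => Mxy.
  split; first by have [] := m1 _ _ Mxy.
  by apply: (swap_mate m1 m2 closedC) Mxy; rewrite Cx.
split; first by have [] := m2 _ _ Mxy.
have := swap_mate m2 m1 (symdiff_closedC m1 m2 closedC) (x := x) (y := y).
by rewrite /swap /= Cx => /(_ isT Mxy); case: (C y).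
Qed.

Lemma count_misses_swap (M1 M2 : V -> option V) (C : pred V) (s : seq V) :
  count (misses (swap C M1 M2)) s + count (misses (swap C M2 M1)) s =
  count (misses M1) s + count (misses M2) s.
Proof.
elim: s => [//|x s IH] /=.
have Ex : misses (swap C M1 M2) x + misses (swap C M2 M1) x =
          misses M1 x + misses M2 x.
  by rewrite /misses /swap; case: (C x) => //; rewrite addnC.
lia.
Qed.

(* A path of distinct vertices in M1 (+) M2 whose first vertex is not
   M1-matched into the path uses M2 and M1 alternately; so its length is
   even if M2 misses its end, and odd if M1 misses its (distinct) end. *)
Lemma alternating_path_parity (p : seq V) (M1 M2 : V -> option V) x :
  matching adj M1 -> matching adj M2 ->
  path (in_symdiff M1 M2) x p -> uniq (x :: p) ->
  (forall y, M1 x = Some y -> y \notin p) ->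
  (M2 (last x p) = None -> ~~ odd (size p)) /\
  (M1 (last x p) = None -> p != [::] -> odd (size p)).
Proof.
elim: p M1 M2 x => [|y q IH] M1 M2 x m1 m2 /=; first by [].
move=> /andP[Exy Hq] /andP[]; rewrite inE negb_or => /andP[_ x_q] uq Hx.
have M2xy : M2 x = Some y.
  move: Exy; rewrite /in_symdiff /in_matching.
  case: (M1 x =P Some y) => [/Hx|_]; first by rewrite inE eqxx.
  by case: (M2 x =P Some y).
have [_ M2yx] := m2 _ _ M2xy.
have Hq' : path (in_symdiff M2 M1) y q by rewrite (eq_path (@in_symdiffC M2 M1)).
have y_mate : forall w, M2 y = Some w -> w \notin q by move=> w; rewrite M2yx => -[<-].
have [IH2 IH1] := IH M2 M1 y m2 m1 Hq' uq y_mate.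
split => [Mlast|Mlast _]; last by apply: IH2.
have q0 : q != [::] by apply/eqP => q_nil; move: Mlast; rewrite q_nil /= M2yx.
by rewrite negbK; apply: IH1.
Qed.

Lemma exposed_alternating_path_even (p : seq V) (M1 M2 : V -> option V) x :
  matching adj M1 -> matching adj M2 ->
  path (in_symdiff M1 M2) x p -> uniq (x :: p) ->
  M1 x = None -> M2 (last x p) = None -> ~~ odd (size p).
Proof.
move=> m1 m2 Hp uxp M1x.
have x_mate : forall y, M1 x = Some y -> y \notin p by move=> y; rewrite M1x.
exact: (alternating_path_parity m1 m2 Hp uxp x_mate).1.
Qed.

End AlternatingSwap.

Section MissSequences.
Variable V : countType.
Variable adj : rel V.
Variable B : nat -> seq V.

Lemma first_difference (f g : nat -> nat) :
  ~ (forall n, f n = g n) ->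
  exists N, (forall n, n < N -> f n = g n) /\ f N <> g N.
Proof.
move=> fg; have ex : exists n, f n != g n.
  apply: NNPP => nex; apply: fg => n; apply/eqP/negPn/negP => fgn.
  by apply: nex; exists n.
exists (ex_minn ex); case: ex_minnP => m /eqP fgm minm; split => // n ltnm.
by apply/eqP/negPn/negP => /minm; rewrite leqNgt ltnm.
Qed.

Lemma maximum_miss_seq_eq (M1 M2 : V -> option V) :
  maximum_matching adj B M1 -> maximum_matching adj B M2 ->
  forall n, miss_seq B M1 n = miss_seq B M2 n.
Proof.
move=> [m1 max1] [m2 max2]; apply: NNPP => /first_difference[N [eqN neN]].
case: (ltngtP (miss_seq B M1 N) (miss_seq B M2 N)) => // ltN.
- by apply: max2; exists M1; split => //; exists N; split => // n /eqN.
- by apply: max1; exists M2; split => //; exists N.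
Qed.

Lemma maximum_of_miss_seq_eq (M M' : V -> option V) :
  maximum_matching adj B M -> matching adj M' ->
  (forall n, miss_seq B M' n = miss_seq B M n) -> maximum_matching adj B M'.
Proof.
move=> [_ maxM] m' eqM'; split => // -[M'' [m'' [N [eqN ltN]]]].
apply: maxM; exists M''; split => //; exists N.
by split=> [n /eqN|]; rewrite -eqM'.
Qed.

Lemma miss_seq_eq_of_average (M M' M'' : V -> option V) :
  maximum_matching adj B M -> matching adj M' -> matching adj M'' ->
  (forall n, miss_seq B M' n + miss_seq B M'' n = 2 * miss_seq B M n) ->
  forall n, miss_seq B M' n = miss_seq B M n.
Proof.
move=> [m maxM] m' m'' sum; apply: NNPP => /first_difference[N [eqN neN]].
case: (ltngtP (miss_seq B M' N) (miss_seq B M N)) => // ltN; apply: maxM.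
- by exists M'; split => //; exists N; split => // n /eqN.
- exists M''; split => //; exists N; split; last by have := sum N; lia.
  by move=> n /eqN eqn; have := sum n; lia.
Qed.

Lemma swap_maximum (M1 M2 : V -> option V) (C : pred V) :
  maximum_matching adj B M1 -> maximum_matching adj B M2 ->
  symdiff_closed M1 M2 C -> maximum_matching adj B (swap C M1 M2).
Proof.
move=> max1 max2 closedC; have [m1 m2] := (max1.1, max2.1).
have closedC' : symdiff_closed M2 M1 C.
  by move=> x y Cx; rewrite in_symdiffC; apply: closedC.
have sw := swap_matching m1 m2 closedC.
apply: (maximum_of_miss_seq_eq max2 sw).
apply: (miss_seq_eq_of_average max2 sw (swap_matching m2 m1 closedC')) => n.
rewrite /miss_seq count_misses_swap -/(miss_seq B M1 n) -/(miss_seq B M2 n).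
by rewrite (maximum_miss_seq_eq max1 max2 n) mul2n addnn.
Qed.

End MissSequences.

Section Reachability.
Variable V : countType.

Definition symdiff_reach (M1 M2 : V -> option V) (u x : V) : Prop :=
  exists p, path (in_symdiff M1 M2) u p /\ last u p = x.

Definition reach_set (M1 M2 : V -> option V) (u : V) : pred V :=
  fun x => if excluded_middle_informative (symdiff_reach M1 M2 u x)
           then true else false.

Lemma reach_setP M1 M2 u x :
  reflect (symdiff_reach M1 M2 u x) (reach_set M1 M2 u x).
Proof. by rewrite /reach_set; case: excluded_middle_informative; constructor. Qed.

Lemma reach_set_closed M1 M2 u : symdiff_closed M1 M2 (reach_set M1 M2 u).
Proof.
move=> x y /reach_setP[p [Hp <-]] Exy; apply/reach_setP.
by exists (rcons p y); rewrite rcons_path last_rcons Hp Exy.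
Qed.

End Reachability.

Theorem lemmaA3 (V : countType) (adj : rel V) (B : nat -> seq V)
  (Hg : simple_graph adj) (Hc : connected_graph adj) (HB : dagger adj B)
  (u v : V) (Mu Mv : V -> option V) :
  ~ (exists M, maximum_matching adj B M /\ misses M u /\ misses M v) ->
  maximum_matching adj B Mu -> misses Mu u ->
  maximum_matching adj B Mv -> misses Mv v ->
  symdiff_even_path Mu Mv u v.
Proof.
move=> no_common maxMu /eqP Mu_u maxMv /eqP Mv_v.
pose C := reach_set Mu Mv u.
have Cu : C u by apply/reach_setP; exists [::].
have maxSw := swap_maximum maxMu maxMv (@reach_set_closed V Mu Mv u).
have /reach_setP[p [Hp last_p]] : C v.
  apply: contraT => notCv; case: no_common; exists (swap C Mu Mv).
  split; first exact: maxSw.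
  by rewrite /misses /swap Cu (negbTE notCv) Mu_u Mv_v.
move: last_p; case: (shortenP Hp) => q Hq uq _ last_q.
exists q; split => //.
by apply: exposed_alternating_path_even maxMu.1 maxMv.1 Hq uq Mu_u _; rewrite last_q.
Qed.
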